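(* Every Gibonacci sequence $\{G_n(a,b)\}$ (with $a,b\in\mathbb{Z}$, $\gcd(a,b)=1$) is complete mod $14$ (and hence also mod $2$ and mod $7$).
   Context: For integers $a,b$ with $\gcd(a,b)=1$, the Gibonacci sequence $\{G_n(a,b)\}_{n\ge1}$ is defined by $G_1=a$, $G_2=b$, $G_{n+1}=G_{n-1}+G_n$. A sequence is complete mod $m$ if every residue class modulo $m$ contains some term of the sequence. *)

From Stdlib Require Import ZArith.
Open Scope Z_scope.

(* gib a b k = G_{k+1}(a,b): gib a b 0 = a = G_1, gib a b 1 = b = G_2,
   and G_{n+1} = G_{n-1} + G_n. *)
Fixpoint gib_pair (a b : Z) (k : nat) : Z * Z :=
  match k with
  | O => (a, b)
  | S k' => let (x, y) := gib_pair a b k' in (y, x + y)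
  end.

(* G n a b = G_n(a,b) for n >= 1 (G 0 a b is an unused junk value). *)
Definition G (a b : Z) (n : nat) : Z := fst (gib_pair a b (Nat.pred n)).

Definition complete_mod (s : nat -> Z) (m : Z) : Prop :=
  forall r : Z, exists n : nat, (1 <= n)%nat /\ s n mod m = r mod m.

(* Modulo m the recurrence only sees residues, so G_n(a,b) mod m is the first
   component of a sequence of residue pairs started at (a mod m, b mod m).
   Completeness mod 14 therefore depends only on the seed pair modulo 14, and
   can be decided by a finite computation: for every residue pair (x, y) that
   is not "both even" and not "both divisible by 7", the first 48 terms of the
   reduced sequence already hit every residue mod 14 (48 is the period of the
   Fibonacci recurrence mod 14).  Coprimality of a and b excludes exactly the
   other seed pairs.  Completeness modulo a divisor of 14 then follows since
   reduction mod 14 followed by reduction mod d is reduction mod d. *)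

From Stdlib Require Import ZArith Lia List Bool.
Open Scope Z_scope.

Fixpoint gib_pair_mod (m x y : Z) (k : nat) : Z * Z :=
  match k with
  | O => (x, y)
  | S k' => let (u, v) := gib_pair_mod m x y k' in (v, (u + v) mod m)
  end.

Lemma gib_pair_mod_spec (m a b : Z) (k : nat) :
  fst (gib_pair a b k) mod m = fst (gib_pair_mod m (a mod m) (b mod m) k) /\
  snd (gib_pair a b k) mod m = snd (gib_pair_mod m (a mod m) (b mod m) k).
Proof.
  induction k as [|k [IHfst IHsnd]]; simpl; [split; reflexivity|].
  destruct (gib_pair a b k) as [x y], (gib_pair_mod m (a mod m) (b mod m) k) as [u v].
  simpl in *. split; [exact IHsnd|].
  rewrite Zplus_mod, IHfst, IHsnd. reflexivity.
Qed.

Corollary G_mod (m a b : Z) (k : nat) :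
  G a b (S k) mod m = fst (gib_pair_mod m (a mod m) (b mod m) k).
Proof. apply gib_pair_mod_spec. Qed.

Definition residues (m : Z) : list Z := map Z.of_nat (seq 0 (Z.to_nat m)).

Lemma in_residues (m z : Z) : 0 <= z < m -> In z (residues m).
Proof.
  intros Hz. apply in_map_iff. exists (Z.to_nat z). split.
  - apply Z2Nat.id; lia.
  - apply in_seq. lia.
Qed.

Definition covers (m : Z) (N : nat) (x y : Z) : bool :=
  forallb (fun r => existsb (fun k => fst (gib_pair_mod m x y k) =? r) (seq 0 N))
    (residues m).

Lemma covers_complete (m : Z) (N : nat) (a b : Z) :
  0 < m -> covers m N (a mod m) (b mod m) = true -> complete_mod (G a b) m.
Proof.
  intros Hm Hcov r.
  assert (Hr : In (r mod m) (residues m))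
    by (apply in_residues, Z.mod_pos_bound; exact Hm).
  unfold covers in Hcov. rewrite forallb_forall in Hcov.
  apply Hcov, existsb_exists in Hr as [k [_ Hk]].
  exists (S k). split; [lia|].
  rewrite G_mod. apply Z.eqb_eq, Hk.
Qed.

Lemma complete_mod_divisor (s : nat -> Z) (m d : Z) :
  (d | m) -> complete_mod s m -> complete_mod s d.
Proof.
  intros Hdm Hcomp r. destruct (Hcomp r) as [n [Hn E]].
  exists n. split; [exact Hn|].
  rewrite <- (Z.mod_mod_divide (s n) m d), <- (Z.mod_mod_divide r m d) by exact Hdm.
  now rewrite E.
Qed.

Lemma coprime_not_both_divisible (a b d : Z) :
  1 < d -> Z.gcd a b = 1 -> a mod d = 0 -> b mod d = 0 -> False.
Proof.
  intros Hd Hab Ha Hb.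
  assert (Hdiv : (d | Z.gcd a b))
    by (apply Z.gcd_greatest; apply Z.mod_divide; lia).
  rewrite Hab in Hdiv. apply Z.divide_1_r in Hdiv. lia.
Qed.

Definition shares_factor_14 (x y : Z) : bool :=
  ((x mod 2 =? 0) && (y mod 2 =? 0)) || ((x mod 7 =? 0) && (y mod 7 =? 0)).

Lemma coprime_seeds_admissible (a b : Z) :
  Z.gcd a b = 1 -> shares_factor_14 (a mod 14) (b mod 14) = false.
Proof.
  intros Hab. unfold shares_factor_14.
  rewrite !Z.mod_mod_divide by (first [exists 7; reflexivity | exists 2; reflexivity]).
  apply not_true_is_false. intros H.
  apply orb_prop in H as [H|H]; apply andb_prop in H as [Ha Hb];
    apply Z.eqb_eq in Ha; apply Z.eqb_eq in Hb.
  - exact (coprime_not_both_divisible a b 2 ltac:(lia) Hab Ha Hb).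
  - exact (coprime_not_both_divisible a b 7 ltac:(lia) Hab Ha Hb).
Qed.

Lemma admissible_seeds_cover_14 :
  forallb (fun x => forallb (fun y => shares_factor_14 x y || covers 14 48 x y)
                      (residues 14))
    (residues 14) = true.
Proof. vm_compute. reflexivity. Qed.

Lemma complete_mod_14 (a b : Z) :
  Z.gcd a b = 1 -> complete_mod (G a b) 14.
Proof.
  intros Hab.
  assert (Hx : In (a mod 14) (residues 14)) by (apply in_residues, Z.mod_pos_bound; lia).
  assert (Hy : In (b mod 14) (residues 14)) by (apply in_residues, Z.mod_pos_bound; lia).
  pose proof admissible_seeds_cover_14 as Hall.
  rewrite forallb_forall in Hall. specialize (Hall _ Hx).
  rewrite forallb_forall in Hall. specialize (Hall _ Hy).
  rewrite coprime_seeds_admissible in Hall by exact Hab.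
  exact (covers_complete 14 48 a b ltac:(lia) Hall).
Qed.

Theorem mainTheorem13 (a b : Z) (hab : Z.gcd a b = 1) :
  complete_mod (G a b) 14 /\ complete_mod (G a b) 2 /\ complete_mod (G a b) 7.
Proof.
  pose proof (complete_mod_14 a b hab) as H14.
  repeat split; [exact H14| |].
  - apply (complete_mod_divisor _ 14); [exists 7; reflexivity | exact H14].
  - apply (complete_mod_divisor _ 14); [exists 2; reflexivity | exact H14].
Qed.
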